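(* Let $0<p_0,p_1,q_0,q_1\le\infty$, $s\in\mathbb R$ and $t>d(1/p_0-1/p_1)_+$. Then there is $c>0$ such that for all $n\in\mathbb N$ $$ b_n(I,b^{s+t}_{p_0,q_0},b^s_{p_1,q_1})\ge c\begin{cases}n^{-t/d}, & 0<p_0\le p_1\le\infty,\\ n^{-t/d+1/p_0-1/p_1}, & 0<p_1<p_0\le\infty.\end{cases} $$
   Context: Sequence spaces: $\nabla=(\nabla_j)_{j\ge0}$ finite subsets of $\{1,\dots,2^d-1\}\times\mathbb Z^d$ with $C_1\le2^{-jd}|\nabla_j|\le C_2$ for all $j\ge J$ (some $0<C_1\le C_2$, $J\in\mathbb N$); $b^s_{p,q}=b^s_{p,q}(\nabla)$ is the space of sequences $a=(a_{j,\lambda})$ with $\|a\|_{b^s_{p,q}}=\big(\sum_{j\ge0}2^{j(s+d(1/2-1/p))q}(\sum_{\lambda\in\nabla_j}|a_{j,\lambda}|^p)^{q/p}\big)^{1/q}<\infty$ (sup if $q=\infty$). $I$ is the identity embedding. Bernstein widths: $b_n(I,F,Y)$ is the supremum of all $r\ge0$ such that the unit ball of $F$ contains $\{y\in V:\|y\|_Y\le r\}$ for some $(n+1)$-dimensional subspace $V$. *)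

From HB Require Import structures.
From mathcomp Require Import all_boot all_order all_algebra.
From mathcomp Require Import all_classical all_reals all_analysis.
Set Implicit Arguments. Unset Strict Implicit. Unset Printing Implicit Defensive.
Import Order.TTheory GRing.Theory Num.Theory.
Local Open Scope ring_scope.

(* wavelet-type index lambda = (e, k) with e in {1,...,2^d-1}, k in Z^d *)
Definition idx (d : nat) := (nat * {ffun 'I_d -> int})%type.

Definition admissible_nabla (R : realType) (d : nat) (nabla : nat -> seq (idx d)) : Prop :=
  (forall j, uniq (nabla j)) /\
  (forall j l, l \in nabla j -> (1 <= l.1 <= 2 ^ d - 1)%N) /\
  exists (C1 C2 : R) (J : nat), 0 < C1 /\ C1 <= C2 /\
    forall j, (J <= j)%N ->
      C1 <= (2%:R ^- (j * d)) * (size (nabla j))%:R <= C2.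

Definition invp (R : realType) (p : \bar R) : R :=
  match p with EFin r => r^-1 | _ => 0 end.

(* sequences a = (a_{j,lambda}); only the values on nabla_j matter *)
Definition seqsp (R : realType) (d : nat) := nat -> idx d -> R.

Definition supported (R : realType) (d : nat) (nabla : nat -> seq (idx d))
  (a : seqsp R d) : Prop :=
  forall j l, l \notin nabla j -> a j l = 0.

Definition lp_level (R : realType) (d : nat) (nabla : nat -> seq (idx d))
  (p : \bar R) (a : seqsp R d) (j : nat) : R :=
  match p with
  | EFin r => (\sum_(l <- nabla j) `|a j l| `^ r) `^ r^-1
  | _ => \big[Num.max/0]_(l <- nabla j) `|a j l|
  end.

Definition bweight (R : realType) (d : nat) (nabla : nat -> seq (idx d))
  (s : R) (p : \bar R) (a : seqsp R d) (j : nat) : R :=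
  (2 `^ (j%:R * (s + d%:R * (2^-1 - invp p)))) * lp_level nabla p a j.

Definition bnorm (R : realType) (d : nat) (nabla : nat -> seq (idx d))
  (s : R) (p q : \bar R) (a : seqsp R d) : \bar R :=
  match q with
  | EFin r => ((\sum_(0 <= j <oo) ((bweight nabla s p a j `^ r)%:E)) `^ r^-1)%E
  | _ => ereal_sup (range (fun j => (bweight nabla s p a j)%:E))
  end.

Definition lincomb (R : realType) (d m : nat) (f : 'I_m -> seqsp R d)
  (c : 'I_m -> R) : seqsp R d :=
  fun j l => \sum_(i < m) c i * f i j l.

(* f_0,...,f_{m-1} are linearly independent elements of b^s_{p,q}(nabla);
   their span is an m-dimensional subspace of b^s_{p,q}(nabla) *)
Definition indep_family (R : realType) (d m : nat) (nabla : nat -> seq (idx d))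
  (s : R) (p q : \bar R) (f : 'I_m -> seqsp R d) : Prop :=
  (forall i, supported nabla (f i) /\ (bnorm nabla s p q (f i) < +oo)%E) /\
  (forall c : 'I_m -> R, (forall j l, lincomb f c j l = 0) -> forall i, c i = 0).

(* Bernstein width b_n(I, b^{sF}_{pF,qF}, b^{sY}_{pY,qY}):
   sup of r >= 0 such that for some (n+1)-dimensional subspace V of F,
   {y in V : ||y||_Y <= r} is contained in the unit ball of F. *)
Definition bernstein_width (R : realType) (d : nat) (nabla : nat -> seq (idx d))
  (sF : R) (pF qF : \bar R) (sY : R) (pY qY : \bar R) (n : nat) : \bar R :=
  ereal_sup [set (r%:E)%E | r in
    [set r : R | 0 <= r /\
      exists f : 'I_n.+1 -> seqsp R d,
        indep_family nabla sF pF qF f /\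
        forall c : 'I_n.+1 -> R,
          (bnorm nabla sY pY qY (lincomb f c) <= r%:E)%E ->
          (bnorm nabla sF pF qF (lincomb f c) <= 1)%E]].

From HB Require Import structures.
From mathcomp Require Import all_boot all_order all_algebra.
From mathcomp Require Import all_classical all_reals all_analysis.
From mathcomp Require Import ring.
Import Order.TTheory GRing.Theory Num.Theory.
Local Open Scope ring_scope.

(* A sequence supported on a single level j has b^s_{p,q} norm
   2^{j(s + d(1/2 - 1/p))} ||a_j||_p, whatever q is.  On the span of n+1 unit
   vectors of level j, the l^{p0} norm is at most N^{(1/p0 - 1/p1)_+} times the
   l^{p1} norm, N = |nabla_j| (monotonicity of l^p norms, resp. Hölder), so the
   Bernstein width is at least 2^{-j(t - d(1/p0 - 1/p1))} N^{-(1/p0 - 1/p1)_+}.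
   For the least admissible j with N >= n+1 both 2^{jd} and N are of order n,
   which turns this into the power n^{-t/d + (1/p0 - 1/p1) - (1/p0 - 1/p1)_+}. *)

Section PowR.
Context {R : realType}.
Implicit Types x r : R.

Lemma powRK x r : 0 <= x -> r != 0 -> (x `^ r) `^ r^-1 = x.
Proof. by move=> x0 r0; rewrite -powRrM mulfV // powRr1. Qed.

Lemma powRVK x r : 0 <= x -> r != 0 -> (x `^ r^-1) `^ r = x.
Proof. by move=> x0 r0; rewrite -powRrM mulVf // powRr1. Qed.

Lemma ler_wpowR2r [r x y : R] : 0 <= r -> 0 <= x -> x <= y -> x `^ r <= y `^ r.
Proof. by move=> r0 x0 xy; apply: ge0_ler_powR; rewrite // nnegrE (le_trans x0). Qed.

Lemma powR_amgm (a b rho : R) : 0 <= a -> 0 <= b -> 0 < rho <= 1 ->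
  a `^ rho * b `^ (1 - rho) <= rho * a + (1 - rho) * b.
Proof.
move=> a0 b0 /andP[rho0]; rewrite le_eqVlt => /predU1P[->|rho1].
  by rewrite subrr powRr0 mulr1 powRr1 // mul1r mul0r addr0.
have rho'_gt0 : 0 < 1 - rho by rewrite subr_gt0.
have := @conjugate_powR R (a `^ rho) (b `^ (1 - rho)) rho^-1 (1 - rho)^-1
  (powR_ge0 _ _) (powR_ge0 _ _).
rewrite !invr_gt0 rho0 rho'_gt0 !invrK => /(_ isT isT (subrKC _ _)).
by rewrite !powRK ?gt_eqF // [_ * a]mulrC [_ * b]mulrC.
Qed.

End PowR.

Section SeqSums.
Context {R : realType} {T : eqType}.
Implicit Types (s : seq T) (F : T -> R).

Lemma sumr_const_seq s (c : R) : \sum_(x <- s) c = (size s)%:R * c.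
Proof. by rewrite big_const_seq count_predT iter_addr_0 mulr_natl. Qed.

Lemma ler_term_sum s F x : (forall y, 0 <= F y) -> x \in s ->
  F x <= \sum_(y <- s) F y.
Proof. by move=> F0 xs; rewrite (big_rem x xs) lerDl sumr_ge0. Qed.

Lemma sum_powR_le s F (rho : R) : (forall x, 0 <= F x) -> 0 < rho <= 1 ->
  \sum_(x <- s) F x `^ rho <= (size s)%:R `^ (1 - rho) * (\sum_(x <- s) F x) `^ rho.
Proof.
move=> F0 /andP[rho0 rho1]; set N : R := (size s)%:R; set Y := \sum_(x <- s) F x.
have Y0 : 0 <= Y by exact: sumr_ge0.
have [Yz|Ynz] := eqVneq Y 0.
  rewrite big_seq big1 ?mulr_ge0 ?powR_ge0 // => x xs.
  have Fx0 : F x = 0.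
    by apply/le_anti; rewrite F0 andbT -Yz; exact: ler_term_sum.
  by rewrite Fx0 powR0 ?gt_eqF.
have Ypos : 0 < Y by rewrite lt_neqAle eq_sym Ynz.
have Npos : 0 < N.
  by rewrite ltr0n lt0n size_eq0; apply: contra_neq Ynz => s0; rewrite /Y s0 big_nil.
have P0 : 0 < N `^ rho * Y `^ (1 - rho) by rewrite mulr_gt0 ?powR_gt0.
rewrite -(ler_pM2l P0) mulrACA -!powRD ?(gt_eqF Npos, gt_eqF Ypos, implybT) //.
rewrite subrKC subrK powRr1 ?(ltW Npos) // powRr1 ?(ltW Ypos) //.
have -> : N * Y = \sum_(x <- s) (rho * (N * F x) + (1 - rho) * Y).
  rewrite big_split /= -!mulr_sumr sumr_const_seq -/N -/Y.
  by rewrite -mulrDl subrKC mul1r.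
(* AM-GM applied to [N * F x] and [Y], with weights [rho] and [1 - rho]. *)
rewrite mulr_sumr; apply: ler_sum => x _.
rewrite mulrAC -powRM ?(ltW Npos) //.
by apply: powR_amgm; rewrite ?mulr_ge0 ?(ltW Npos) ?rho0.
Qed.

End SeqSums.

Section FiniteLp.
Context {R : realType} {T : eqType} (s : seq T) (F : T -> R).
Hypothesis F_ge0 : forall x, 0 <= F x.

Local Notation lp r := ((\sum_(x <- s) F x `^ r) `^ r^-1).
Local Notation linf := (\big[Num.max/0]_(x <- s) F x).

Lemma bigmax_le_lp (r : R) : 0 < r -> linf <= lp r.
Proof.
move=> r0; rewrite big_seq; apply: bigmax_le => [|x xs]; first exact: powR_ge0.
rewrite -[F x](powRK _ _ (F_ge0 x) (lt0r_neq0 r0)).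
apply: ler_wpowR2r; rewrite ?invr_ge0 ?(ltW r0) ?powR_ge0 //.
exact: ler_term_sum (fun y => powR_ge0 (F y) r) xs.
Qed.

Lemma lp_le_size_bigmax (r : R) : 0 < r -> lp r <= (size s)%:R `^ r^-1 * linf.
Proof.
move=> r0; have linf0 : 0 <= linf by exact: bigmax_ge_id.
rewrite -[linf](powRK _ _ linf0 (lt0r_neq0 r0)) -powRM ?ler0n ?powR_ge0 //.
apply: ler_wpowR2r; rewrite ?invr_ge0 ?(ltW r0) //.
  by apply: sumr_ge0 => x _; exact: powR_ge0.
rewrite -(sumr_const_seq s) big_seq [leRHS]big_seq; apply: ler_sum => x xs.
by apply: ler_wpowR2r; rewrite ?(ltW r0) //; exact: le_bigmax_seq.
Qed.

(* [F x `^ r0 = F x `^ (r0 - r1) * F x `^ r1], and [F x <= linf <= lp r1]. *)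
Lemma lp_antimono (r0 r1 : R) : 0 < r1 -> r1 <= r0 -> lp r0 <= lp r1.
Proof.
move=> r1_gt0 r10; have r0_gt0 : 0 < r0 by exact: lt_le_trans r10.
set L1 := lp r1; have L10 : 0 <= L1 by exact: powR_ge0.
rewrite -[leRHS](powRK _ _ L10 (lt0r_neq0 r0_gt0)).
apply: ler_wpowR2r; rewrite ?invr_ge0 ?(ltW r0_gt0) //.
  by apply: sumr_ge0 => x _; exact: powR_ge0.
have powRB1 x : x `^ r0 = x `^ (r0 - r1) * x `^ r1.
  by rewrite -powRD subrK // gt_eqF.
rewrite powRB1 /L1 powRVK ?sumr_ge0 ?gt_eqF // => [|x _]; last exact: powR_ge0.
rewrite mulr_sumr big_seq [leRHS]big_seq; apply: ler_sum => x xs.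
rewrite powRB1; apply: ler_wpM2r; first exact: powR_ge0.
apply: ler_wpowR2r; rewrite ?subr_ge0 //.
apply: le_trans _ (bigmax_le_lp _ r1_gt0); exact: le_bigmax_seq.
Qed.

Lemma lp_le_size_lp (r0 r1 : R) : 0 < r0 -> r0 <= r1 ->
  lp r0 <= (size s)%:R `^ (r0^-1 - r1^-1) * lp r1.
Proof.
move=> r0_gt0 r01; have r1_gt0 : 0 < r1 by exact: lt_le_trans r01.
set rho := r0 / r1.
have rho_bd : 0 < rho <= 1 by rewrite divr_gt0 // ler_pdivrMr // mul1r.
have Fr0 x : F x `^ r0 = (F x `^ r1) `^ rho.
  by rewrite -powRrM /rho mulrCA mulfV ?gt_eqF // mulr1.
have r0V_ge0 : 0 <= r0^-1 by rewrite invr_ge0 ltW.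
have := sum_powR_le s (fun x => F x `^ r1) rho (fun x => powR_ge0 _ _) rho_bd.
under eq_bigr do rewrite -Fr0.
move/(ler_wpowR2r r0V_ge0 (sumr_ge0 _ (fun x _ => powR_ge0 _ _)))/le_trans; apply.
rewrite powRM ?ler0n ?powR_ge0 // -!powRrM.
have -> : (1 - rho) / r0 = r0^-1 - r1^-1 by rewrite /rho; field; rewrite !gt_eqF.
by have -> : rho / r0 = r1^-1 by rewrite /rho; field; rewrite !gt_eqF.
Qed.

End FiniteLp.

Lemma invp_le {R : realType} (p0 p1 : \bar R) : (0 < p0)%E -> (0 < p1)%E ->
  (p0 <= p1)%E -> invp p1 <= invp p0.
Proof.
case: p0 => [r0||] //; case: p1 => [r1||] //= r0_gt0 r1_gt0.
all: rewrite ?lte_fin ?lee_fin in r0_gt0 r1_gt0 * => r01.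
- by rewrite lef_pV2 ?posrE.
- by rewrite invr_ge0 ltW.
Qed.

Lemma invp_lt {R : realType} (p0 p1 : \bar R) : (0 < p0)%E -> (0 < p1)%E ->
  (p1 < p0)%E -> invp p0 < invp p1.
Proof.
case: p0 => [r0||] //; case: p1 => [r1||] //= r0_gt0 r1_gt0.
all: rewrite ?lte_fin in r0_gt0 r1_gt0 * => r10.
- by rewrite ltf_pV2 ?posrE.
- by rewrite invr_gt0.
Qed.

Definition level_scale {R : realType} (d : nat) (s : R) (p : \bar R) (j : nat) : R :=
  2 `^ (j%:R * (s + d%:R * (2^-1 - invp p))).

Definition idx0 (d : nat) : idx d := (0%N, [ffun=> 0%R]).

(* [idx0] is only the default of [nth]: it is never reached when [i < size (nabla j)]. *)
Definition level_basis {R : realType} {d : nat} (nabla : nat -> seq (idx d))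
    (j n : nat) (i : 'I_n) : seqsp R d :=
  fun j' l => ((j' == j) && (l == nth (idx0 d) (nabla j) i))%:R.

Section Levels.
Context {R : realType} {d : nat} {nabla : nat -> seq (idx d)}.
Implicit Types (p q : \bar R) (a : seqsp R d).

Lemma lp_level_ge0 p a j : 0 <= lp_level nabla p a j.
Proof. by case: p => [r||] /=; [exact: powR_ge0 | exact: bigmax_ge_id | exact: bigmax_ge_id]. Qed.

Lemma lp_level_eq0 p a j : (0 < p)%E -> (forall l, a j l = 0) -> lp_level nabla p a j = 0.
Proof.
case: p => [r||] //= r0 a0; last by apply: bigmax_eq_id => l _; rewrite a0 normr0.
rewrite lte_fin in r0.
rewrite big1 ?powR0 ?invr_eq0 ?gt_eqF // => l _.
by rewrite a0 normr0 powR0 ?gt_eqF.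
Qed.

Lemma bweight_ge0 s p a j : 0 <= bweight nabla s p a j.
Proof. by rewrite mulr_ge0 ?powR_ge0 ?lp_level_ge0. Qed.

Lemma lp_level_le p0 p1 a j : (0 < p0)%E -> (0 < p1)%E ->
  lp_level nabla p0 a j <=
  (size (nabla j))%:R `^ Num.max 0 (invp p0 - invp p1) * lp_level nabla p1 a j.
Proof.
have a_ge0 l : 0 <= `|a j l| by [].
case: p0 => [r0||] //; case: p1 => [r1||] //= r0_gt0 r1_gt0.
all: rewrite ?lte_fin in r0_gt0 r1_gt0.
- have [r10|r01] := lerP r1 r0.
    rewrite (max_idPl _) ?powRr0 ?mul1r; first exact: lp_antimono.
    by rewrite subr_le0 lef_pV2 ?posrE.
  rewrite (max_idPr _); first exact: lp_le_size_lp (ltW r01).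
  by rewrite subr_ge0 lef_pV2 ?posrE // ltW.
- by rewrite subr0 (max_idPr _) ?invr_ge0 ?(ltW r0_gt0) //; exact: lp_le_size_bigmax.
- rewrite (max_idPl _) ?powRr0 ?mul1r; first exact: bigmax_le_lp.
  by rewrite sub0r oppr_le0 invr_ge0 ltW.
- by rewrite subrr maxxx powRr0 mul1r.
Qed.

Lemma bnorm_single_level s p q a j : (0 < p)%E -> (0 < q)%E ->
  (forall j' l, j' != j -> a j' l = 0) ->
  bnorm nabla s p q a = (bweight nabla s p a j)%:E.
Proof.
move=> p0 q0 a0.
have bw0 j' : j' != j -> bweight nabla s p a j' = 0.
  by move=> j'j; rewrite /bweight lp_level_eq0 ?mulr0 // => l; exact: a0.
case: q q0 => [r||] //= q0; last first.
  apply/le_anti/andP; split; last by apply: ereal_sup_ubound; exists j.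
  apply: ge_ereal_sup => _ [j' _ <-].
  have [->|j'j] := eqVneq j' j; first by [].
  by rewrite bw0 // lee_fin bweight_ge0.
rewrite lte_fin in q0.
rewrite (@nneseries_split _ _ 0 j.+1); last by move=> k _; rewrite lee_fin powR_ge0.
rewrite eseries0; last by move=> i; rewrite add0n => ij _; rewrite bw0 ?powR0 ?gt_eqF // gtn_eqF.
rewrite adde0 add0n big_nat_recr //= big1_seq ?add0e; last first.
  move=> i /andP[_]; rewrite mem_index_iota => /andP[_ ij].
  by rewrite bw0 ?ltn_eqF // powR0 // gt_eqF.
by rewrite poweR_EFin powRK ?bweight_ge0 ?gt_eqF.
Qed.

End Levels.

Section LevelBasis.
Context {R : realType} {d : nat} (nabla : nat -> seq (idx d)) (j n : nat).
Hypotheses (nabla_uniq : uniq (nabla j)) (n_le_size : (n <= size (nabla j))%N).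

Local Notation f := (@level_basis R d nabla j n).

Lemma level_basis_supported i : supported nabla (f i).
Proof.
move=> j' l; rewrite /level_basis; have [->|//] := eqVneq j' j.
have [->|//] := eqVneq l (nth (idx0 d) (nabla j) i).
by rewrite mem_nth // (leq_trans (ltn_ord i)).
Qed.

Lemma lincomb_level_basis_off c j' l : j' != j -> lincomb f c j' l = 0.
Proof. by move=> /negbTE j'j; rewrite /lincomb big1 // => i _; rewrite /level_basis j'j mulr0. Qed.

Lemma lincomb_level_basis_nth c (i : 'I_n) : lincomb f c j (nth (idx0 d) (nabla j) i) = c i.
Proof.
have iN (k : 'I_n) : (k < size (nabla j))%N by exact: leq_trans (ltn_ord k) n_le_size.
rewrite /lincomb (bigD1 i) //= big1 ?addr0 => [|k ki]; first by rewrite /level_basis !eqxx mulr1.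
by rewrite /level_basis eqxx nth_uniq ?iN // eq_sym (negbTE (ki : val k != val i)) mulr0.
Qed.

End LevelBasis.

Lemma bernstein_width_ge_level {R : realType} {d : nat} (nabla : nat -> seq (idx d))
    (sF sY : R) (pF qF pY qY : \bar R) (n j : nat) :
  (0 < pF)%E -> (0 < qF)%E -> (0 < pY)%E -> (0 < qY)%E ->
  uniq (nabla j) -> (n < size (nabla j))%N ->
  ((level_scale d sY pY j /
      (level_scale d sF pF j * (size (nabla j))%:R `^ Num.max 0 (invp pF - invp pY)))%:E
   <= bernstein_width nabla sF pF qF sY pY qY n)%E.
Proof.
move=> pF0 qF0 pY0 qY0 nabla_uniq n_lt_size.
set f := @level_basis R d nabla j n.+1.
set AF := level_scale d sF pF j; set AY := level_scale d sY pY j.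
set KN := _ `^ Num.max _ _.
have AF0 : 0 < AF by exact: powR_gt0.
have KN0 : 0 < KN by rewrite powR_gt0 // ltr0n (leq_ltn_trans _ n_lt_size).
have bnorm_lincomb s p q c : (0 < p)%E -> (0 < q)%E ->
    bnorm nabla s p q (lincomb f c) = (bweight nabla s p (lincomb f c) j)%:E.
  by move=> p0 q0; apply: bnorm_single_level => // j' l; exact: lincomb_level_basis_off.
apply: ereal_sup_ubound; exists (AY / (AF * KN)) => //; split.
  by rewrite divr_ge0 ?powR_ge0 // ltW ?mulr_gt0.
exists f; split; first split.
- move=> i; split; first exact: level_basis_supported.
  suff -> : bnorm nabla sF pF qF (f i) = (bweight nabla sF pF (f i) j)%:E by exact: ltry.
  by apply: bnorm_single_level => // j' l; rewrite /f /level_basis => /negbTE ->.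
- move=> c c0 i.
  by rewrite -(@lincomb_level_basis_nth R d nabla j n.+1 nabla_uniq n_lt_size c i) c0.
move=> c; rewrite !bnorm_lincomb // !lee_fin /bweight -/AF -/AY ler_pM2l ?powR_gt0 // => hY.
apply: le_trans (ler_wpM2l (ltW AF0) (lp_level_le pF pY _ _ pF0 pY0)) _.
rewrite mulrA -[leRHS](mulfV (lt0r_neq0 (mulr_gt0 AF0 KN0))).
by apply: ler_wpM2l => //; rewrite ltW ?mulr_gt0.
Qed.

Lemma level_scale_shift {R : realType} (d j : nat) (s t : R) (p0 p1 : \bar R) :
  (0 < d)%N ->
  level_scale d (s + t) p0 j =
  level_scale d s p1 j * (2 ^+ (j * d)) `^ (t / d%:R - (invp p0 - invp p1)).
Proof.
move=> d_gt0; rewrite /level_scale -powR_mulrn ?ler0n // -powRrM.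
rewrite -powRD ?pnatr_eq0 ?implybT //; congr (_ `^ _).
by rewrite natrM; field; rewrite pnatr_eq0 -lt0n.
Qed.

(* The first level [j >= J] with [n.+1 <= C1 * 2 ^+ (j * d)]: being minimal, it
   still has [2 ^+ (j * d) = O(n)]. *)
Lemma exists_dyadic_level {R : realType} {C1 : R} (J : nat) {d n : nat} :
  0 < C1 -> (0 < d)%N -> (0 < n)%N ->
  exists j, [/\ (J <= j)%N, n.+1%:R <= C1 * 2 ^+ (j * d) &
    2 ^+ (j * d) <= (2 ^+ (J * d) + 2 ^+ d.+1 / C1) * n%:R].
Proof.
move=> C1_gt0 d_gt0 n_gt0.
pose P k := n.+1%:R <= C1 * 2 ^+ ((J + k) * d) :> R.
have [k Pk] : exists k, P k.
  exists (Num.bound (n.+1%:R / C1)); rewrite /P -ler_pdivrMl // mulrC.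
  apply: le_trans (ltW (archi_boundP _)) _; first by rewrite divr_ge0 ?ler0n ?ltW.
  rewrite -natrX ler_nat (leq_trans (ltnW (ltn_expl _ (isT : (1 < 2)%N)))) //.
  by rewrite leq_pexp2l // (leq_trans (leq_addl J _)) // leq_pmulr.
case: (ex_minnP (ex_intro P k Pk)) => {}k {}Pk k_min.
exists (J + k)%N; split => //; first exact: leq_addr.
have n_ge1 : 1 <= n%:R :> R by rewrite ler1n.
have D0 : 0 <= 2 ^+ d.+1 / C1 :> R by rewrite divr_ge0 ?exprn_ge0 ?ltW.
case: k Pk k_min => [|k] _ k_min.
  rewrite addn0 mulrDl -[leLHS]addr0.
  by apply: lerD; [rewrite ler_pMr // exprn_gt0 | rewrite mulr_ge0 ?ler0n].
have : ~~ P k by apply/negP => /k_min; rewrite ltnn.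
rewrite /P -ltNge addnS mulSn addnC exprD => Pk_fail.
rewrite mulrDl ler_wpDl ?mulr_ge0 ?exprn_ge0 ?ler0n // exprS.
set Y := 2 ^+ ((k + J) * d) in Pk_fail *.
have Y_le : Y <= 2 * n%:R / C1.
  rewrite ler_pdivlMr // mulrC; apply: le_trans (ltW Pk_fail) _.
  by rewrite -natrM ler_nat mul2n -addnn -addn1 leq_add2l.
have -> : 2 * 2 ^+ d / C1 * n%:R = 2 ^+ d * (2 * n%:R / C1) by ring.
by rewrite ler_wpM2l ?exprn_ge0.
Qed.

Lemma powR_lower_bound {R : realType} (X N m C K e dp : R) :
  0 < X -> 0 < N -> 0 < m -> 0 < C -> 0 < K -> 0 <= dp -> 0 <= e + dp ->
  N <= C * X -> X <= K * m ->
  (C `^ dp * K `^ (e + dp))^-1 * m `^ (- (e + dp)) <= (X `^ e * N `^ dp)^-1.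
Proof.
move=> X0 N0 m0 C0 K0 dp0 E0 NCX XKm.
rewrite powRN -invfM lef_pV2 ?posrE ?mulr_gt0 ?powR_gt0 //.
have NX : N `^ dp <= C `^ dp * X `^ dp.
  by rewrite -powRM ?(ltW C0, ltW X0) //; exact: ler_wpowR2r dp0 (ltW N0) NCX.
have XE : X `^ (e + dp) <= K `^ (e + dp) * m `^ (e + dp).
  by rewrite -powRM ?(ltW K0, ltW m0) //; exact: ler_wpowR2r E0 (ltW X0) XKm.
apply: le_trans (ler_wpM2l (powR_ge0 _ _) NX) _.
rewrite mulrCA -powRD ?(gt_eqF X0) ?implybT // -mulrA.
by rewrite ler_wpM2l ?powR_ge0.
Qed.

Lemma bernstein_exponentE {R : realType} (p0 p1 : \bar R) (u x : R) :
  (0 < p0)%E -> (0 < p1)%E ->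
  (if (p0 <= p1)%E then x `^ (- u) else x `^ (- u + invp p0 - invp p1)) =
  x `^ (- (u - (invp p0 - invp p1) + Num.max 0 (invp p0 - invp p1))).
Proof.
move=> p0_gt0 p1_gt0; case: ifP => p01; congr (_ `^ _).
  by rewrite (max_idPr _) ?subrK // subr_ge0 invp_le.
rewrite (max_idPl _) ?addr0; first by ring.
by rewrite subr_le0 ltW // invp_lt // ltNge p01.
Qed.

Theorem lemma5 (R : realType) (d : nat) (nabla : nat -> seq (idx d))
  (p0 p1 q0 q1 : \bar R) (s t : R) :
  (0 < d)%N ->
  admissible_nabla R nabla ->
  (0 < p0)%E -> (p0 <= +oo)%E -> (0 < p1)%E -> (p1 <= +oo)%E ->
  (0 < q0)%E -> (q0 <= +oo)%E -> (0 < q1)%E -> (q1 <= +oo)%E ->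
  d%:R * Num.max 0 (invp p0 - invp p1) < t ->
  exists c : R, 0 < c /\
    forall n : nat, (0 < n)%N ->
      ((c * (if (p0 <= p1)%E then n%:R `^ (- t / d%:R)
             else n%:R `^ (- t / d%:R + invp p0 - invp p1)))%:E
       <= bernstein_width nabla (s + t) p0 q0 s p1 q1 n)%E.
Proof.
move=> d_gt0 [nabla_uniq [_ [C1 [C2 [J [C1_gt0 [C12 nabla_size]]]]]]].
move=> p0_gt0 _ p1_gt0 _ q0_gt0 _ q1_gt0 _ t_gt.
set dp := Num.max 0 (invp p0 - invp p1) in t_gt *.
set e := t / d%:R - (invp p0 - invp p1).
set K : R := 2 ^+ (J * d) + 2 ^+ d.+1 / C1.
have dp_ge0 : 0 <= dp by rewrite le_max lexx.
have K_gt0 : 0 < K by rewrite addr_gt0 ?divr_gt0 ?exprn_gt0.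
have C2_gt0 : 0 < C2 by exact: lt_le_trans C12.
have t_gt0 : 0 < t by apply: le_lt_trans t_gt; rewrite mulr_ge0 ?ler0n.
have E_ge0 : 0 <= e + dp.
  rewrite /e -addrA addr_ge0 ?divr_ge0 ?ler0n ?(ltW t_gt0) //.
  by rewrite addrC subr_ge0 le_max lexx orbT.
exists (C2 `^ dp * K `^ (e + dp))^-1; split; first by rewrite invr_gt0 mulr_gt0 ?powR_gt0.
move=> n n_gt0; rewrite mulNr bernstein_exponentE // -/dp -/e.
have [j [Jj n_le_X X_le_n]] := exists_dyadic_level J C1_gt0 d_gt0 n_gt0.
have /andP[C1_le C2_ge] := nabla_size j Jj.
set X : R := 2 ^+ (j * d) in n_le_X X_le_n.
have X_gt0 : 0 < X by rewrite exprn_gt0.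
have N_le : (size (nabla j))%:R <= C2 * X by rewrite mulrC -ler_pdivrMl.
have N_ge : C1 * X <= (size (nabla j))%:R by rewrite -ler_pdivlMr // mulrC.
have n_lt_N : (n < size (nabla j))%N by rewrite -(ler_nat R) (le_trans n_le_X).
apply: le_trans _ (bernstein_width_ge_level nabla _ _ _ _ _ _ _ _
  p0_gt0 q0_gt0 p1_gt0 q1_gt0 (nabla_uniq j) n_lt_N).
have scale_neq0 : level_scale d s p1 j != 0 by rewrite lt0r_neq0 // powR_gt0.
rewrite lee_fin (level_scale_shift d j s t p0 p1 d_gt0) -/X -/e -/dp.
rewrite -[_ * X `^ e * _]mulrA [in leRHS]invfM mulVKf //.
by apply: powR_lower_bound; rewrite ?ltr0n ?(leq_ltn_trans _ n_lt_N).
Qed.
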